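(* (Rolle's theorem for $\alpha$-fractional differentiable functions.) Let $0<a<b$ and let $f:[a,b]\to\mathbb{R}$ be a function such that (1) $f$ is continuous on $[a,b]$, (2) $f$ is $\alpha$-differentiable at every point of $(a,b)$ for some $\alpha\in(0,1)$, and (3) $f(a)=f(b)$. Then there exists $c\in(a,b)$ such that $\mathcal{D}^\alpha(f)(c)=0$.
   Context: For a real function $f$, a point $t>0$ in the interior of its domain, and $\alpha\in(0,1)$, the $\alpha$-fractional derivative of $f$ at $t$ is $\mathcal{D}^\alpha(f)(t)=\lim_{\epsilon\to 0}\frac{f(te^{\epsilon t^{-\alpha}})-f(t)}{\epsilon}$, and $f$ is $\alpha$-differentiable at $t$ if this limit exists (as a real number). *)

From Stdlib Require Import Reals.
From Coquelicot Require Import Coquelicot.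
Open Scope R_scope.

Definition frac_quot (alpha : R) (f : R -> R) (t : R) (eps : R) : R :=
  (f (t * exp (eps * Rpower t (- alpha))) - f t) / eps.

Definition is_frac_derive (alpha : R) (f : R -> R) (t L : R) : Prop :=
  is_lim (frac_quot alpha f t) 0 L.

Definition frac_differentiable (alpha : R) (f : R -> R) (t : R) : Prop :=
  exists L : R, is_frac_derive alpha f t L.

Definition continuous_on_closed (a b : R) (f : R -> R) : Prop :=
  forall x, a <= x <= b ->
    filterlim f (within (fun y => a <= y <= b) (locally x)) (locally (f x)).

(** Fermat: at a local extremum [c], the points [c * exp (eps * c ^ (-alpha))] for small
    [eps] stay where [f] is on one side of [f c], so the fractional difference quotient
    has one sign for [eps > 0] and the opposite sign for [eps < 0], and its limit is [0].
    Rolle: by the extreme value theorem [f] attains its maximum and minimum on [[a, b]];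
    if both are attained only at endpoints then [f a = f b] makes [f] constant, so some
    interior point is an extremum in every case. *)

From Stdlib Require Import Reals Lra.
From Coquelicot Require Import Coquelicot.
Open Scope R_scope.

Lemma filter_le_within_locally' (D : R -> Prop) (x : R) :
  (forall y, D y -> y <> x) -> filter_le (within D (locally x)) (locally' x).
Proof.
  intros HD P [d HP]; exists d; intros y Hy HDy.
  exact (HP y Hy (HD y HDy)).
Qed.

Lemma is_lim_sign_change_eq0 (q : R -> R) (L : R) :
  at_right 0 (fun e => q e <= 0) -> at_left 0 (fun e => 0 <= q e) ->
  is_lim q 0 L -> L = 0.
Proof.
  intros Hright Hleft Hq.
  assert (Hle : L <= 0).
  { apply (filterlim_le (F := at_right 0) q (fun _ => 0) L 0 Hright).
    - apply (filterlim_filter_le_1 (F := locally' 0) q); [|exact Hq].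
      apply filter_le_within_locally'; intros y Hy; lra.
    - apply filterlim_const. }
  assert (Hge : 0 <= L).
  { apply (filterlim_le (F := at_left 0) (fun _ => 0) q 0 L Hleft).
    - apply filterlim_const.
    - apply (filterlim_filter_le_1 (F := locally' 0) q); [|exact Hq].
      apply filter_le_within_locally'; intros y Hy; lra. }
  lra.
Qed.

Definition frac_shift (alpha t eps : R) : R := t * exp (eps * Rpower t (- alpha)).

Lemma frac_shift_cont (alpha t : R) :
  filterlim (frac_shift alpha t) (locally 0) (locally t).
Proof.
  assert (Ht : frac_shift alpha t 0 = t)
    by (unfold frac_shift; rewrite Rmult_0_l, exp_0; ring).
  rewrite <- Ht at 2.
  apply (ex_derive_continuous (frac_shift alpha t)).
  unfold frac_shift; auto_derive; auto.
Qed.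

Lemma frac_derive_local_max (alpha : R) (f : R -> R) (c L : R) :
  locally c (fun y => f y <= f c) -> is_frac_derive alpha f c L -> L = 0.
Proof.
  intros Hmax HL.
  assert (Hnear : locally 0 (fun e => f (frac_shift alpha c e) <= f c))
    by exact (frac_shift_cont alpha c _ Hmax).
  apply (is_lim_sign_change_eq0 (frac_quot alpha f c)); [| | exact HL];
    unfold at_right, at_left, within; revert Hnear; apply filter_imp;
    intros e Hnum Hsign; unfold frac_quot, frac_shift in *.
  - apply Rmult_le_0_r; [lra |].
    left; apply Rinv_0_lt_compat; exact Hsign.
  - assert (/ e < 0) by (apply Rinv_lt_0_compat; exact Hsign).
    unfold Rdiv; nra.
Qed.

Lemma is_frac_derive_opp (alpha : R) (f : R -> R) (t L : R) :
  is_frac_derive alpha f t L -> is_frac_derive alpha (fun x => - f x) t (- L).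
Proof.
  intros HL.
  apply (is_lim_ext (fun e => - frac_quot alpha f t e)).
  - intros e; unfold frac_quot, Rdiv; ring.
  - exact (is_lim_opp _ _ (Finite L) HL).
Qed.

Lemma frac_derive_local_min (alpha : R) (f : R -> R) (c L : R) :
  locally c (fun y => f c <= f y) -> is_frac_derive alpha f c L -> L = 0.
Proof.
  intros Hmin HL.
  assert (HoppL : - L = 0).
  { apply (frac_derive_local_max alpha (fun x => - f x) c).
    - revert Hmin; apply filter_imp; intros y Hy; lra.
    - exact (is_frac_derive_opp alpha f c L HL). }
  lra.
Qed.

Lemma locally_of_interval (P : R -> Prop) (a b c : R) :
  a < c < b -> (forall y, a <= y <= b -> P y) -> locally c P.
Proof.
  intros Hc HP.
  assert (Hd : 0 < Rmin (c - a) (b - c)) by (apply Rmin_glb_lt; lra).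
  exists (mkposreal _ Hd); intros y Hy; apply HP.
  apply Rabs_lt_between' in Hy.
  pose proof (Rmin_l (c - a) (b - c)); pose proof (Rmin_r (c - a) (b - c)).
  simpl in Hy; lra.
Qed.

Definition clamp (a b x : R) : R := Rmax a (Rmin b x).

Lemma clamp_in (a b x : R) : a <= b -> a <= clamp a b x <= b.
Proof. intros Hab; unfold clamp, Rmax, Rmin; repeat destruct Rle_dec; lra. Qed.

Lemma clamp_id (a b x : R) : a <= x <= b -> clamp a b x = x.
Proof. intros Hx; unfold clamp; rewrite Rmin_right, Rmax_right; lra. Qed.

Lemma clamp_dist (a b x y : R) :
  a <= x <= b -> Rabs (clamp a b y - x) <= Rabs (y - x).
Proof.
  intros Hx; unfold clamp, Rmax, Rmin.
  repeat destruct Rle_dec; unfold Rabs; repeat destruct Rcase_abs; lra.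
Qed.

Lemma continuous_on_closed_clamp (a b : R) (f : R -> R) (x : R) :
  a <= x <= b -> continuous_on_closed a b f ->
  continuity_pt (fun y => f (clamp a b y)) x.
Proof.
  intros Hx Hf; apply continuity_pt_filterlim.
  rewrite (clamp_id a b x Hx).
  apply (filterlim_comp _ _ _ (clamp a b) f _ (within (fun y => a <= y <= b) (locally x)));
    [| exact (Hf x Hx)].
  intros P [d HP]; exists d; intros y Hy.
  apply (HP (clamp a b y)); [| apply clamp_in; lra].
  apply (Rle_lt_trans _ (Rabs (y - x))); [apply clamp_dist; exact Hx | exact Hy].
Qed.

Lemma continuous_on_closed_extrema (a b : R) (f : R -> R) :
  a <= b -> continuous_on_closed a b f ->
  exists m M, a <= m <= b /\ a <= M <= b /\
    forall y, a <= y <= b -> f m <= f y <= f M.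
Proof.
  intros Hab Hf.
  set (g := fun y => f (clamp a b y)).
  assert (Hg : forall x, a <= x <= b -> continuity_pt g x)
    by (intros x Hx; exact (continuous_on_closed_clamp a b f x Hx Hf)).
  assert (Egf : forall x, a <= x <= b -> g x = f x)
    by (intros x Hx; unfold g; rewrite clamp_id; auto).
  destruct (continuity_ab_min g a b Hab Hg) as [m [Hm Hma]].
  destruct (continuity_ab_maj g a b Hab Hg) as [M [HM HMa]].
  exists m, M; split; [exact Hma | split; [exact HMa |]].
  intros y Hy; rewrite <- (Egf m Hma), <- (Egf M HMa), <- (Egf y Hy); auto.
Qed.

Lemma rolle_extremum (a b : R) (f : R -> R) :
  a < b -> continuous_on_closed a b f -> f a = f b ->
  exists c, a < c < b /\
    ((forall y, a <= y <= b -> f y <= f c) \/ (forall y, a <= y <= b -> f c <= f y)).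
Proof.
  intros Hab Hf Hfab.
  assert (Hendpoint : forall x, a <= x <= b -> a < x < b \/ f x = f a).
  { intros x Hx; destruct (Req_dec x a) as [-> | Hxa]; [now right |].
    destruct (Req_dec x b) as [-> | Hxb]; [now right |].
    left; destruct Hx as [[Hx1 | Hx1] [Hx2 | Hx2]]; congruence || lra. }
  destruct (continuous_on_closed_extrema a b f (Rlt_le _ _ Hab) Hf)
    as [m [M [Hm [HM Hbounds]]]].
  destruct (Hendpoint M HM) as [HMin | HMa].
  { exists M; split; [exact HMin | left; intros y Hy; apply Hbounds, Hy]. }
  destruct (Hendpoint m Hm) as [Hmin | Hma].
  { exists m; split; [exact Hmin | right; intros y Hy; apply Hbounds, Hy]. }
  exists ((a + b) / 2); split; [lra | left].
  intros y Hy.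
  pose proof (Hbounds y Hy); pose proof (Hbounds ((a + b) / 2) ltac:(lra)); lra.
Qed.

Theorem mainTheorem5 (a b alpha : R) (f : R -> R) :
  0 < a -> a < b -> 0 < alpha < 1 ->
  continuous_on_closed a b f ->
  (forall t, a < t < b -> frac_differentiable alpha f t) ->
  f a = f b ->
  exists c, a < c < b /\ is_frac_derive alpha f c 0.
Proof.
  intros _ Hab _ Hf Hdiff Hfab.
  destruct (rolle_extremum a b f Hab Hf Hfab) as [c [Hc Hext]].
  exists c; split; [exact Hc |].
  destruct (Hdiff c Hc) as [L HL].
  replace 0 with L; [exact HL |].
  destruct Hext as [Hmax | Hmin].
  - exact (frac_derive_local_max alpha f c L (locally_of_interval _ a b c Hc Hmax) HL).
  - exact (frac_derive_local_min alpha f c L (locally_of_interval _ a b c Hc Hmin) HL).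
Qed.
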